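(* For $n\geq 4$, let $A_n$ be the split graph with stable set $S=\{s_1,\dots,s_n\}$, central clique $K=\{v_{ij}:1\le i<j\le n\}$, and $N(v_{ij})\cap S=\{s_i,s_j\}$ for all $1\le i<j\le n$. Then $A_n\in SVS$, the branch graph $B(A_n/K)$ is the complete graph on $\{s_1,\dots,s_n\}$, and $A_n\in[n,2,1]\setminus[n-1,2,1]$.
   Context: A graph is split if its vertex set partitions into a stable set $S$ and a clique $K$ (central clique). For $n\geq 4$, the $n$-sun $S_n$ is the split graph with stable set $\{s_1,\dots,s_n\}$, central clique $\{v_1,\dots,v_n\}$, $N(s_i)=\{v_i,v_{i+1}\}$ for $1\le i\le n-1$ and $N(s_n)=\{v_n,v_1\}$. A split graph $G$ with partition $(S,K)$ belongs to $SVS$ if: $G$ is VPT (a vertex-intersection graph of paths in a tree); every $v\in K$ satisfies $|N(v)\cap S|\le 2$; and whenever $S_k$ with $k=4$ or $k$ odd, $k\ge 5$, is an induced subgraph of $G$, some $v\in K$ is adjacent to two non-consecutive vertices of the stable set of that $S_k$. $[h,2,1]$ is the class of vertex-intersection graphs of paths in a tree of maximum degree at most $h$. For a clique $C$ of $G$, the branch graph $B(G/C)$ has vertex set the vertices of $V(G)\setminus C$ adjacent to some vertex of $C$, two such vertices $v,w$ being adjacent iff (1) $vw\notin E(G)$; (2) some vertex of $C$ is adjacent to both; (3) there exist $v',w'\in C$ with $v'$ adjacent to $v$ but not $w$, and $w'$ adjacent to $w$ but not $v$. *)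

From mathcomp Require Import all_boot.
Set Implicit Arguments. Unset Strict Implicit. Unset Printing Implicit Defensive.

Definition simple_graph (V : finType) (adj : rel V) :=
  symmetric adj /\ irreflexive adj.

Definition stable_set (V : finType) (adj : rel V) (S : {set V}) :=
  forall u v, u \in S -> v \in S -> ~~ adj u v.

Definition clique (V : finType) (adj : rel V) (K : {set V}) :=
  forall u v, u \in K -> v \in K -> u != v -> adj u v.

Definition split_partition (V : finType) (adj : rel V) (S K : {set V}) :=
  [/\ S :&: K = set0, S :|: K = [set: V], stable_set adj S & clique adj K].

Definition is_tree (W : finType) (t : rel W) :=
  [/\ simple_graph t,
      (forall x y : W, connect t x y) &
      (forall c : seq W, 3 <= size c -> ~~ ucycleb t c)].

Definition is_tree_path (W : finType) (t : rel W) (P : {set W}) :=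
  exists (x : W) (p : seq W), [/\ path t x p, uniq (x :: p) & P = [set y | y \in x :: p]].

Definition max_degree_le (W : finType) (t : rel W) (h : nat) :=
  forall x : W, #|[set y | t x y]| <= h.

Definition path_model (V W : finType) (adj : rel V) (t : rel W) (P : V -> {set W}) :=
  (forall v, is_tree_path t (P v)) /\
  (forall u v, u != v -> adj u v = (P u :&: P v != set0)).

Definition VPT (V : finType) (adj : rel V) :=
  exists (W : finType) (t : rel W) (P : V -> {set W}),
    is_tree t /\ path_model adj t P.

Definition h21 (h : nat) (V : finType) (adj : rel V) :=
  exists (W : finType) (t : rel W) (P : V -> {set W}),
    [/\ is_tree t, max_degree_le t h & path_model adj t P].

(** The k-sun S_k (indices 0..k-1): inl i = s_i, inr i = v_i;
    N(s_i) = {v_i, v_(i+1 mod k)}, the v_i form a clique. *)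
Definition sun_adj (k : nat) (x y : 'I_k + 'I_k) : bool :=
  match x, y with
  | inl _, inl _ => false
  | inr i, inr j => i != j
  | inl i, inr j => (val j == val i) || (val j == (val i).+1 %% k)
  | inr j, inl i => (val j == val i) || (val j == (val i).+1 %% k)
  end.

Definition sun_nonconsec (k : nat) (i j : 'I_k) : bool :=
  [&& i != j, val j != (val i).+1 %% k & val i != (val j).+1 %% k].

Definition induced_sun (V : finType) (adj : rel V) (k : nat) (f : 'I_k + 'I_k -> V) :=
  injective f /\ (forall x y, x != y -> adj (f x) (f y) = sun_adj x y).

Definition SVS (V : finType) (adj : rel V) (S K : {set V}) :=
  [/\ simple_graph adj, split_partition adj S K, VPT adj,
      (forall v, v \in K -> #|[set s in S | adj v s]| <= 2) &
      (forall (k : nat), (k == 4) || (odd k && (5 <= k)) ->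
        forall f : 'I_k + 'I_k -> V, induced_sun adj f ->
        exists v, v \in K /\ exists i j : 'I_k,
          [/\ sun_nonconsec i j, adj v (f (inl i)) & adj v (f (inl j))])].

Definition branch_vertices (V : finType) (adj : rel V) (C : {set V}) : {set V} :=
  [set v | (v \notin C) && [exists c in C, adj c v]].

Definition branch_adj (V : finType) (adj : rel V) (C : {set V}) (v w : V) : bool :=
  [&& ~~ adj v w,
      [exists c in C, adj c v && adj c w],
      [exists v' in C, adj v' v && ~~ adj v' w] &
      [exists w' in C, adj w' w && ~~ adj w' v]].

(** The graph A_n (indices 0..n-1): inl i = s_i, inr (i,j) = v_ij with i<j. *)
Definition An_V (n : nat) : finType :=
  ('I_n + {p : 'I_n * 'I_n | p.1 < p.2})%type.

Definition An_adj (n : nat) (x y : An_V n) : bool :=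
  match x, y with
  | inl _, inl _ => false
  | inr p, inr q => p != q
  | inl i, inr p => (i == (val p).1) || (i == (val p).2)
  | inr p, inl i => (i == (val p).1) || (i == (val p).2)
  end.

Definition An_S (n : nat) : {set An_V n} :=
  [set x | if x is inl _ then true else false].

Definition An_K (n : nat) : {set An_V n} :=
  [set x | if x is inr _ then true else false].

(* Membership in [n,2,1] (hence VPT) comes from the star K_{1,n}: s_i is
   the leaf i and v_ij the path i - centre - j.

   Rooting a tree at a vertex r, every path
   of the tree consists of two descending branches below its apex (a
   "valley"), so it is convex: it contains every ancestor of its vertices that
   lies below its apex.  In a path model of A_n this gives, in turn:
   (1) a Helly property: the deepest apex of a clique path lies on all clique
       paths, so they share a vertex c;
   (2) c avoids every stable path;
   (3) rooted at c, the apexes of the stable paths are pairwise incomparable,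
       and two of them leaving c along the same edge would be comparable, as
       both lie on the path of some v_ij, which has only two branches at c.
   Hence the first steps from c towards these apexes are n distinct
   neighbours of c, and the tree has a vertex of degree at least n. *)

From mathcomp Require Import all_boot.
Set Implicit Arguments. Unset Strict Implicit. Unset Printing Implicit Defensive.

Lemma head_mem (T : eqType) (x : T) (s : seq T) : s != [::] -> head x s \in s.
Proof. by case: s => //= y s _; rewrite mem_head. Qed.

Lemma prefix_take_total (T : eqType) (s : seq T) i j :
  prefix (take i s) (take j s) || prefix (take j s) (take i s).
Proof.
by case: (leqP i j) => [/take_takel|/ltnW/take_takel] <-; rewrite prefix_take ?orbT.
Qed.

Section RootedTree.
Variables (W : finType) (t : rel W).
Hypothesis tree_t : is_tree t.

Lemma tree_sym : symmetric t. Proof. by case: tree_t => [[]]. Qed.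
Lemma tree_irr : irreflexive t. Proof. by case: tree_t => [[]]. Qed.

Lemma tree_path_unique p : forall x q, path t x p -> uniq (x :: p) ->
  path t x q -> uniq (x :: q) -> last x p = last x q -> p = q.
Proof.
elim: p => [|a p IH] x q.
  case: q => [//|b q] _ _ _ /= /andP[xq _] E.
  by move: (mem_last b q); rewrite -E (negbTE xq).
case: q => [|b q].
  move=> /= _ /andP[xp _] _ _ E.
  by move: (mem_last a p); rewrite /= E (negbTE xp).
move=> /andP[txa pa] Up /andP[txb pb] Uq /= E.
rewrite -/(path t a p) in pa; rewrite -/(path t b q) in pb.
have [eab|ab] := eqVneq a b.
  subst b; congr cons; apply: (IH a) => //.
  - by case/andP: Up.
  - by case/andP: Uq.
have [aq|aq] := boolP (a \in q).
  (* x, b, ..., a would close a cycle with the edge a x *)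
  exfalso; case/splitPr: aq pb Uq => q1 q2 pb Uq.
  case: tree_t => _ _ /(_ (x :: b :: q1 ++ [:: a])).
  rewrite /= size_cat addn1 => /(_ isT).
  have U : uniq (x :: b :: q1 ++ [:: a]).
    apply: subseq_uniq Uq.
    by rewrite -!cat_cons cat_subseq // sub1seq mem_head.
  move: pb; rewrite cat_path /= => /andP[pq1 /andP[la _]].
  rewrite /ucycleb U andbT => /negP; apply.
  by rewrite /= txb rcons_cat cat_path pq1 /= la tree_sym txa.
(* otherwise a, x, b, q is a second simple path from a to the same endpoint *)
exfalso; have E' : p = x :: b :: q.
  apply: (IH a) => //=; first by case/andP: Up.
  - by rewrite tree_sym txa txb.
  - move: Up Uq => /= /andP[]; rewrite inE negb_or => /andP[xa _] _ ->.
    by rewrite andbT !in_cons !negb_or eq_sym xa ab aq.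
by move: Up; rewrite E' /= !inE eqxx orbT.
Qed.

Variable r : W.

Lemma root_path_exists y : exists p, [&& path t r p, uniq (r :: p) & last r p == y].
Proof.
case: tree_t => _ /(_ r y) /connectP [p pp ->] _.
by case: (shortenP pp) => p' pp' up' _; exists p'; rewrite pp' up' eqxx.
Qed.

(* The vertices, after the root r, of the unique simple path from r to y. *)
Definition root_path y := xchoose (root_path_exists y).

Definition anc u w := prefix (root_path u) (root_path w).

Definition depth u := size (root_path u).

Definition child y z := root_path z == rcons (root_path y) z.

Lemma root_pathP y : [/\ path t r (root_path y), uniq (r :: root_path y) & last r (root_path y) = y].
Proof. by case/and3P: (xchooseP (root_path_exists y)) => -> -> /eqP. Qed.

Lemma root_path_eq y p : path t r p -> uniq (r :: p) -> last r p = y -> root_path y = p.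
Proof.
move=> pp up ly; case: (root_pathP y) => p1 u1 l1.
by apply: (tree_path_unique p1 u1 pp up); rewrite l1 ly.
Qed.

Lemma root_path_inj : injective root_path.
Proof.
by move=> x y E; case: (root_pathP x) => _ _ <-; case: (root_pathP y) => _ _ <-; rewrite E.
Qed.

Lemma root_path_root : root_path r = [::].
Proof. by apply: root_path_eq. Qed.

Lemma root_path_nil y : (root_path y == [::]) = (y == r).
Proof. by rewrite -root_path_root (inj_eq root_path_inj). Qed.

Lemma root_path_cat s1 s2 y : root_path y = s1 ++ s2 -> root_path (last r s1) = s1.
Proof.
move=> E; case: (root_pathP y); rewrite E cat_path => /andP[p1 _] U _.
by apply: root_path_eq => //; move: U; rewrite -cat_cons cat_uniq => /andP[].
Qed.

Lemma root_path_head y : y != r -> t r (head r (root_path y)).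
Proof.
rewrite -root_path_nil; case: (root_pathP y) => + _ _.
by case: (root_path y) => [//|z s] /= /andP[].
Qed.

Lemma anc_antisym u w : anc u w -> anc w u -> u = w.
Proof.
move=> uw wu; apply: root_path_inj.
move: uw; rewrite /anc prefixE take_oversize ?(size_prefix wu) //.
by move/eqP.
Qed.

Lemma tree_edge_child y z : t y z -> child y z || child z y.
Proof.
move=> tyz; case: (root_pathP y) => py uy ly.
have [zin|zout] := boolP (z \in r :: root_path y); last first.
  (* z off the root path of y: extending it by z gives the root path of z *)
  apply/orP; left; apply/eqP; apply: root_path_eq.
  - by rewrite rcons_path py ly.
  - by rewrite -rcons_cons rcons_uniq zout uy.
  - by rewrite last_rcons.
(* otherwise z precedes y on the root path of y, so y is a child of z *)
have yz : y != z by apply: contraTneq tyz => ->; rewrite tree_irr.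
apply/orP; right; move: zin; rewrite in_cons => /orP[/eqP zr|zin].
  rewrite /child zr root_path_root /=; apply/eqP; apply: root_path_eq => //=.
    by rewrite tree_sym -zr tyz.
  by rewrite inE andbT eq_sym -zr.
have [s1 [s2 E]] : exists s1 s2, root_path y = s1 ++ z :: s2.
  by case/splitPr: zin => s1 s2; exists s1, s2.
have Ez : root_path z = rcons s1 z.
  by have := root_path_cat (s1 := rcons s1 z) (s2 := s2) (y := y); rewrite last_rcons cat_rcons; apply.
suff Es2 : s2 = [:: y] by rewrite /child E Ez Es2 -!cats1 -catA.
move: py uy ly; rewrite E cat_path => /andP[_ /= /andP[_ pz]].
rewrite /= => /andP[_]; rewrite cat_uniq => /and3P[_ _ U2] L.
apply: (tree_path_unique pz U2) => /=.
- by rewrite tree_sym tyz.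
- by rewrite inE andbT eq_sym.
- by move: L; rewrite last_cat.
Qed.

Lemma path_valley q : forall x, path t x q -> uniq (x :: q) ->
  exists m a b, [/\ x :: q = rev a ++ m :: b, path child m a & path child m b].
Proof.
elim: q => [|y q IH] x; first by exists x, [::], [::].
move=> /andP[txy pq] /andP[xq U].
have [m [a [b [E da db]]]] := IH y pq U.
case/orP: (tree_edge_child txy) => [cxy|cyx]; last first.
  exists m, (rcons a x), b; split => //; first by rewrite rev_rcons /= E.
  rewrite rcons_path da /=; suff -> : last m a = y by [].
  by case/lastP: a E {da} => [|a w]; [case | rewrite rev_rcons last_rcons => -[]].
case/lastP: a E da => [|a w] E da.
  move: E db => /= -[<- <-] db.
  by exists x, [::], (y :: q); rewrite /= cxy.
(* x would be the parent of its own parent w *)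
exfalso; move: E; rewrite rev_rcons => -[ew E]; subst w.
move: da cxy; rewrite rcons_path /child => /andP[_ /eqP ->] /eqP /rcons_inj[].
move=> /root_path_inj xa; move: xq (mem_last m a).
by rewrite E xa !(in_cons, mem_cat) mem_rev => /negP + /orP[] xm; apply; rewrite xm ?orbT.
Qed.

Lemma child_path_mem m s w : path child m s ->
  reflect (exists j, root_path w = root_path m ++ take j s) (w \in m :: s).
Proof.
elim: s m => [|z s IH] m /=.
  move=> _; rewrite inE; apply: (iffP eqP) => [->|[j]]; first by exists 0; rewrite cats0.
  by rewrite cats0 => /root_path_inj.
move=> /andP[/eqP cz /IH{}IH]; rewrite in_cons.
apply: (iffP orP) => [[/eqP->|/IH[j Ej]]|[[|j] Ej]].
- by exists 0; rewrite cats0.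
- by exists j.+1; rewrite Ej cz /= cat_rcons.
- by left; apply/eqP/root_path_inj; rewrite Ej cats0.
- by right; apply/IH; exists j; rewrite Ej cz cat_rcons.
Qed.

Lemma branch_anc_closed m s u w : path child m s -> w \in m :: s ->
  anc u w -> depth m <= depth u -> u \in m :: s.
Proof.
move=> ds /(child_path_mem _ ds)[j Ew]; rewrite /anc prefixE Ew => /eqP Eu le.
apply/(child_path_mem _ ds); exists (minn (depth u - depth m) j).
by rewrite -Eu take_cat ltnNge le take_min.
Qed.

Lemma branch_anc m s w : path child m s -> w \in m :: s -> anc m w.
Proof. by move=> ds /(child_path_mem _ ds)[j Ew]; rewrite /anc Ew prefix_prefix. Qed.

Definition valley (P : {set W}) m a b := [/\ path child m a, path child m b,
  P = [set w | (w \in m :: a) || (w \in m :: b)] & {in a, forall u, u \notin b}].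

Lemma tree_path_valley P : is_tree_path t P -> exists m a b, valley P m a b.
Proof.
case=> x [q [pq uq ->]].
have [m [a [b [E da db]]]] := path_valley pq uq.
exists m, a, b; split => //.
  by apply/setP => w; rewrite !in_set E mem_cat mem_rev !in_cons; case: eqP; case: (_ \in a).
move=> u ua; move: uq; rewrite E cat_uniq => /and3P[_ + _].
by apply: contra => ub; apply/hasP; exists u; rewrite ?mem_rev // in_cons ub orbT.
Qed.

Lemma valley_anc P m a b w : valley P m a b -> w \in P -> anc m w.
Proof.
case=> da db -> _; rewrite in_set => /orP[]; [exact: branch_anc da | exact: branch_anc db].
Qed.

Lemma valley_convex P m a b u w : valley P m a b -> w \in P ->
  anc u w -> depth m <= depth u -> u \in P.
Proof.
case=> da db -> _; rewrite !in_set => /orP[] wP uw le.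
  by rewrite (branch_anc_closed da wP uw le).
by rewrite (branch_anc_closed db wP uw le) orbT.
Qed.

Definition is_apex (P : {set W}) m := (m \in P) && [forall w in P, anc m w].

Definition apex (P : {set W}) := odflt r [pick m | is_apex P m].

Lemma valley_is_apex P m a b : valley P m a b -> is_apex P m.
Proof.
move=> V; apply/andP; split; last by apply/forall_inP => w; apply: valley_anc V.
by case: V => _ _ -> _; rewrite in_set mem_head.
Qed.

Lemma tree_path_apex P : is_tree_path t P -> exists a b, valley P (apex P) a b.
Proof.
case/tree_path_valley=> m [a [b V]]; exists a, b; suff -> : apex P = m by [].
rewrite /apex; case: pickP => [m' /andP[m'P /forall_inP m'anc] /= | /(_ m)].
  apply: anc_antisym (valley_anc V m'P); apply: m'anc.
  by have /andP[] := valley_is_apex V.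
by rewrite (valley_is_apex V).
Qed.

Lemma tree_path_convex P u w : is_tree_path t P -> w \in P ->
  anc u w -> depth (apex P) <= depth u -> u \in P.
Proof. by case/tree_path_apex=> a [b V]; apply: valley_convex V. Qed.

Lemma apexP P : is_tree_path t P -> is_apex P (apex P).
Proof. by case/tree_path_apex=> a [b V]; apply: valley_is_apex V. Qed.

Lemma tree_path_root_apex P : is_tree_path t P -> r \in P -> apex P = r.
Proof.
move=> /apexP/andP[_ /forall_inP/[apply]]; rewrite /anc root_path_root prefixs0.
by rewrite root_path_nil => /eqP.
Qed.

Lemma tree_path_anc_closed P u w : is_tree_path t P -> r \in P -> w \in P ->
  anc u w -> u \in P.
Proof.
move=> tP rP wP uw; have rtop := tree_path_root_apex tP rP.
by apply: tree_path_convex tP wP uw _; rewrite rtop /depth root_path_root.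
Qed.

(* Two vertices of a path through the root that leave the root along the same
   edge are comparable: the path has only two branches below the root. *)
Lemma tree_path_branch P x y : is_tree_path t P -> r \in P -> x \in P -> y \in P ->
  x != r -> y != r -> head r (root_path x) = head r (root_path y) -> anc x y || anc y x.
Proof.
move=> tP rP; have [a [b]] := tree_path_apex tP.
rewrite tree_path_root_apex // => -[da db -> dis].
have branch z : (z \in r :: a) || (z \in r :: b) ->
    exists j, exists2 s, (s == a) || (s == b) & root_path z = take j s.
  case/orP=> [/(child_path_mem _ da) | /(child_path_mem _ db)] [j];
    rewrite root_path_root => ->.
  - by exists j, a; rewrite ?eqxx.
  - by exists j, b; rewrite ?eqxx ?orbT.
rewrite !in_set => /branch[j1 [s1 s1ab Ex]] /branch[j2 [s2 s2ab Ey]].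
rewrite -!root_path_nil /anc Ex Ey => xr yr.
have [<- _|s12 ehead] := eqVneq s1 s2; first exact: prefix_take_total.
(* on different branches, the common first vertex would lie on both *)
have := mem_take (head_mem r xr); have := mem_take (head_mem r yr); rewrite ehead.
move: s1ab s2ab s12 => /orP[]/eqP-> /orP[]/eqP->; rewrite ?eqxx // => _.
- by move=> hb /dis; rewrite hb.
- by move=> /dis /negP.
Qed.

End RootedTree.

Lemma An_sym n : symmetric (@An_adj n).
Proof. by case=> [i|p] [j|q] //=; rewrite eq_sym. Qed.

Lemma An_irr n : irreflexive (@An_adj n).
Proof. by case=> [i|p] //=; rewrite eqxx. Qed.

Lemma An_K_clique n : clique (@An_adj n) (An_K n).
Proof. by case=> [i|p] [j|q]; rewrite !inE //= => _ _; apply: contraNN => /eqP ->. Qed.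

Lemma An_split n : split_partition (@An_adj n) (An_S n) (An_K n).
Proof.
split; last exact: An_K_clique.
- by apply/setP => x; rewrite !inE; case: x.
- by apply/setP => x; rewrite !inE; case: x.
- by move=> [i|p] [j|q]; rewrite !inE.
Qed.

Lemma An_S_neq_K n i (v : An_V n) : v \in An_K n -> inl i != v.
Proof. by case: v => [j|p]; rewrite inE. Qed.

Lemma An_K_degree n (v : An_V n) : v \in An_K n -> #|[set s in An_S n | An_adj v s]| <= 2.
Proof.
case: v => [i|p]; rewrite inE // => _.
have sub : [set s in An_S n | An_adj (inr p) s] \subset [set inl (val p).1; inl (val p).2].
  by apply/subsetP => -[i|q]; rewrite !inE.
by apply: leq_trans (subset_leq_card sub) _; rewrite cards2 ltnS leq_b1.
Qed.

Lemma exists_other n (i j : 'I_n) : 3 <= n -> exists k : 'I_n, k != i /\ k != j.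
Proof.
move=> n3; have : 0 < #|~: [set i; j]|.
  have pair_small : #|[set i; j]| <= 2 by rewrite cards2 ltnS leq_b1.
  rewrite -(ltn_add2l #|[set i; j]|) addn0 cardsC card_ord.
  exact: leq_ltn_trans pair_small n3.
by case/card_gt0P=> k; rewrite !inE negb_or => /andP[ki kj]; exists k.
Qed.

Lemma clique_vertex n (i j : 'I_n) : i != j ->
  exists2 v, v \in An_K n & forall k, An_adj v (inl k) = (k == i) || (k == j).
Proof.
move=> ij; case: (ltngtP i j) => [lt|lt|/val_inj eij]; last by rewrite eij eqxx in ij.
- by exists (inr (exist (fun p : 'I_n * 'I_n => p.1 < p.2) (i, j) lt)); rewrite ?inE.
- exists (inr (exist (fun p : 'I_n * 'I_n => p.1 < p.2) (j, i) lt)); rewrite ?inE //.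
  by move=> k; rewrite /= orbC.
Qed.

Lemma An_branch_vertices n : 3 <= n -> branch_vertices (@An_adj n) (An_K n) = An_S n.
Proof.
move=> n3; apply/setP => -[i|p]; rewrite !inE //=.
have [j [ji _]] := exists_other i i n3.
have [v vK vadj] := clique_vertex ji.
by apply/exists_inP; exists v; rewrite // vadj eqxx orbT.
Qed.

(* Two stable vertices s_i, s_j are branch-adjacent: v_ij sees both, while
   v_ik and v_jk (k a third index) each see only one of them. *)
Lemma An_branch_complete n v w : 3 <= n -> v \in An_S n -> w \in An_S n -> v != w ->
  branch_adj (@An_adj n) (An_K n) v w.
Proof.
case: v w => [i|p] [j|q]; rewrite !inE // => n3 _ _ ne.
have ij : i != j by apply: contraNN ne => /eqP ->.
have [k [ki kj]] := exists_other i j n3.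
have [v vK vadj] := clique_vertex ij.
have [vi viK viadj] := clique_vertex ki.
have [vj vjK vjadj] := clique_vertex kj.
apply/and4P; split => //; apply/exists_inP.
- by exists v; rewrite // !vadj !eqxx orbT.
- by exists vi; rewrite // !viadj eqxx orbT /= negb_or ![j == _]eq_sym kj ij.
- by exists vj; rewrite // !vjadj eqxx orbT /= negb_or [i == k]eq_sym ki ij.
Qed.

Lemma An_nonneighbours_stable n (x y z : An_V n) : x != y -> x != z ->
  An_adj y z -> ~~ An_adj x y -> ~~ An_adj x z -> exists a, x = inl a.
Proof.
case: x => [a|p]; first by exists a.
case: y => [b|q] xy; last by rewrite /= negbK => _ _ /eqP pq; rewrite pq eqxx in xy.
case: z => [c|q] xz //= _ _; rewrite negbK => /eqP pq.
by rewrite pq eqxx in xz.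
Qed.

(* The sun condition of SVS: in any induced k-sun (k >= 4) of A_n, the
   stable vertices s_0 and s_2 are stable in A_n, and the clique vertex
   joining them sees two non-consecutive stable vertices of the sun. *)
Lemma An_sun_condition n k (f : 'I_k + 'I_k -> An_V n) : 4 <= k ->
  induced_sun (@An_adj n) f -> exists v, v \in An_K n /\ exists i j : 'I_k,
    [/\ sun_nonconsec i j, An_adj v (f (inl i)) & An_adj v (f (inl j))].
Proof.
move=> k4 [finj fadj].
have stable s c1 c2 : c1 != c2 -> ~~ sun_adj (inl s) (inr c1) ->
    ~~ sun_adj (inl s) (inr c2) -> exists a, f (inl s) = inl a.
  move=> c12 s1 s2.
  by apply: (An_nonneighbours_stable (y := f (inr c1)) (z := f (inr c2)));
    rewrite ?(inj_eq finj) ?fadj.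
pose o0 := Ordinal (leq_trans (isT : 0 < 4) k4).
pose o1 := Ordinal (leq_trans (isT : 1 < 4) k4).
pose o2 := Ordinal (leq_trans (isT : 2 < 4) k4).
pose o3 := Ordinal (leq_trans (isT : 3 < 4) k4).
have m1 : 1 %% k = 1 by rewrite modn_small // (leq_trans _ k4).
have m3 : 3 %% k = 3 by rewrite modn_small.
have [a fa] : exists a, f (inl o0) = inl a by apply: (stable _ o2 o3); rewrite //= ?m1 ?m3.
have [b fb] : exists b, f (inl o2) = inl b by apply: (stable _ o0 o1); rewrite //= ?m1 ?m3.
have ab : a != b.
  apply: contraNneq (_ : f (inl o0) != f (inl o2)) => [eab|]; first by rewrite fa fb eab.
  by rewrite (inj_eq finj).
have [v vK vadj] := clique_vertex ab.
exists v; split => //; exists o0, o2; split.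
- by rewrite /sun_nonconsec /= m1 m3.
- by rewrite fa vadj eqxx.
- by rewrite fb vadj eqxx orbT.
Qed.

Definition star n : rel (option 'I_n) := fun x y => (x == None) (+) (y == None).

Lemma star_tree n : is_tree (@star n).
Proof.
split.
- by split=> [x y|x]; rewrite /star ?addbb // addbC.
- move=> x y; apply: (@connect_trans _ _ None).
    by case: x => [x|]; [apply: connect1 | apply: connect0].
  by case: y => [y|]; [apply: connect1 | apply: connect0].
- (* a cycle in a star would have to return to the centre through a leaf *)
  case=> [|a [|b [|d rest]]] // _.
  rewrite /ucycleb /=; case: a => [a|]; case: b => [b|]; case: d => [d|] //=;
    rewrite ?inE ?andbF //=.
  by case: rest => [|[e|] rest] //=; rewrite ?inE ?andbF ?eqxx ?orbT ?andbF.
Qed.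

Lemma star_degree n : max_degree_le (@star n) n.
Proof.
move=> x; apply: leq_trans (_ : #|[set~ x]| <= n); last first.
  by rewrite cardsC1 card_option card_ord.
by apply: subset_leq_card; apply/subsetP => y; rewrite !inE; apply: contraTneq => ->; rewrite /star addbb.
Qed.

Definition star_path n (v : An_V n) : {set option 'I_n} :=
  match v with
  | inl i => [set y | y \in [:: Some i]]
  | inr p => [set y | y \in [:: Some (val p).1; None; Some (val p).2]]
  end.

Lemma star_model n : path_model (@An_adj n) (@star n) (@star_path n).
Proof.
split=> [[i|p]|].
- by exists (Some i), [::].
- exists (Some (val p).1), [:: None; Some (val p).2]; split => //.
  rewrite /= !inE /= andbT; apply/eqP => -[] E.
  by move: (valP p); rewrite E ltnn.
case=> [i|p] [j|q] uv; apply/esym.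
- apply/negbTE/set0Pn => -[z]; rewrite !inE => /andP[/eqP -> /eqP [] eij].
  by move: uv; rewrite eij eqxx.
- apply/set0Pn/idP => [[z]|ij].
    by rewrite !inE => /andP[/eqP -> /or3P[] /eqP // [] ->]; rewrite eqxx ?orbT.
  by exists (Some i); rewrite !inE; case/orP: ij => /eqP <-; rewrite eqxx ?orbT.
- apply/set0Pn/idP => [[z]|ij].
    by rewrite !inE => /andP[/or3P[] /eqP -> // /eqP [] <-]; rewrite /= eqxx ?orbT.
  by exists (Some j); rewrite !inE; case/orP: ij => /eqP <-; rewrite eqxx ?orbT.
- have -> : An_adj (inr p) (inr q) by apply: contraNneq uv => ->.
  by apply/set0Pn; exists None; rewrite !inE eqxx !orbT.
Qed.

Lemma An_h21 n : h21 n (@An_adj n).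
Proof. by exists (option 'I_n), (@star n), (@star_path n); split; [apply: star_tree | apply: star_degree | apply: star_model]. Qed.

Section DegreeLowerBound.
Variables (n : nat) (W : finType) (t : rel W) (P : An_V n -> {set W}).
Hypotheses (n3 : 3 <= n) (tree_t : is_tree t) (model : path_model (@An_adj n) t P).

Local Notation root_path := (root_path tree_t).
Local Notation anc := (anc tree_t).
Local Notation depth := (depth tree_t).
Local Notation apex := (apex tree_t).

Lemma model_path v : is_tree_path t (P v).
Proof. by case: model. Qed.

Lemma model_nonempty v : exists x, x \in P v.
Proof. by case: (model_path v) => x [p [_ _ ->]]; exists x; rewrite inE mem_head. Qed.

Lemma model_meet u v : u != v -> An_adj u v -> exists2 z, z \in P u & z \in P v.
Proof.
by move=> uv; rewrite (proj2 model _ _ uv) => /set0Pn[z]; rewrite inE => /andP[]; exists z.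
Qed.

Lemma model_disjoint u v z : u != v -> ~~ An_adj u v -> z \in P u -> z \in P v -> False.
Proof.
move=> uv; rewrite (proj2 model _ _ uv) negbK => /eqP uv0 zu zv.
by have := in_set0 z; rewrite -uv0 inE zu zv.
Qed.

Lemma K_paths_meet u v : u \in An_K n -> v \in An_K n -> exists2 z, z \in P u & z \in P v.
Proof.
move=> uK vK; have [<-|uv] := eqVneq u v.
  by have [z zu] := model_nonempty u; exists z.
exact: model_meet uv (An_K_clique uK vK uv).
Qed.

(* Helly property: the paths of the clique vertices share a vertex.  Root the
   tree anywhere and take the clique path whose apex is deepest: that apex lies
   on every other clique path, by convexity. *)
Lemma K_paths_common_vertex : exists c, forall v, v \in An_K n -> c \in P v.
Proof.
pose i0 : 'I_n := Ordinal (leq_trans (isT : 0 < 3) n3).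
have [j0 [j0i0 _]] := exists_other i0 i0 n3.
have [v0 v0K _] := clique_vertex j0i0.
have [r0 _] := model_nonempty v0.
case: (arg_maxnP (fun v => depth r0 (apex r0 (P v))) v0K) => vs vsK vsmax.
exists (apex r0 (P vs)) => v vK.
have [z zvs zv] := K_paths_meet vsK vK.
apply: tree_path_convex (model_path v) zv _ (vsmax v vK).
by have /andP[_ /forall_inP] := apexP tree_t r0 (model_path vs); apply.
Qed.

(* A vertex common to all clique paths avoids every stable path: for a third
   and fourth index j, k, the path of v_jk misses the one of s_i. *)
Lemma K_paths_vertex_notin_S c i : (forall v, v \in An_K n -> c \in P v) -> c \notin P (inl i).
Proof.
move=> cK; apply/negP => ci.
have [j [ji _]] := exists_other i i n3; have [k [ki kj]] := exists_other i j n3.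
have jk : j != k by rewrite eq_sym.
have [v vK vadj] := clique_vertex jk.
apply: (model_disjoint (An_S_neq_K i vK) _ ci (cK v vK)).
by rewrite An_sym vadj negb_or ![i == _]eq_sym ji ki.
Qed.

Section RootedAtCommonVertex.
Variable c : W.
Hypothesis cK : forall v, v \in An_K n -> c \in P v.

Let top i := apex c (P (inl i)).
Let first_step i := head c (root_path c (top i)).

Lemma top_in_S i : top i \in P (inl i).
Proof. by have /andP[] := apexP tree_t c (model_path (inl i)). Qed.

Lemma top_neq_c i : top i != c.
Proof.
by apply: contraNneq (K_paths_vertex_notin_S i cK) => <-; apply: top_in_S.
Qed.

(* The path of a clique neighbour of s_i contains the apex of the path of s_i:
   it meets that path and, passing through the root c, contains all
   ancestors of its vertices. *)
Lemma top_in_K i v : v \in An_K n -> An_adj v (inl i) -> top i \in P v.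
Proof.
move=> vK vi; have [z zi zv] := model_meet (An_S_neq_K i vK) (etrans (An_sym _ _) vi).
apply: tree_path_anc_closed (model_path v) (cK vK) zv _.
by have /andP[_ /forall_inP] := apexP tree_t c (model_path (inl i)); apply.
Qed.

(* For distinct i, j, k the apex of s_i is not an ancestor of the apex of s_j:
   otherwise the path of v_jk would contain it. *)
Lemma tops_incomparable i j k : i != j -> i != k -> j != k -> ~~ anc c (top i) (top j).
Proof.
move=> ij ik jk; apply/negP => ij_anc.
have [v vK vadj] := clique_vertex jk.
have tjv : top j \in P v by apply: top_in_K; rewrite // vadj eqxx.
have tiv := tree_path_anc_closed (model_path v) (cK vK) tjv ij_anc.
apply: (model_disjoint (An_S_neq_K i vK) _ (top_in_S i) tiv).
by rewrite An_sym vadj negb_or ij ik.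
Qed.

(* Distinct stable vertices leave c along distinct edges: if s_i and s_j
   left along the same edge, their apexes, both on the path of v_ij through c,
   would be comparable. *)
Lemma first_step_inj : injective first_step.
Proof.
move=> i j eq_step; apply/eqP/negPn/negP => ij.
have [k [ki kj]] := exists_other i j n3.
have [v vK vadj] := clique_vertex ij.
have tiv : top i \in P v by apply: top_in_K; rewrite // vadj eqxx.
have tjv : top j \in P v by apply: top_in_K; rewrite // vadj eqxx orbT.
have ik : i != k by rewrite eq_sym.
have jk : j != k by rewrite eq_sym.
have ji : j != i by rewrite eq_sym.
case/orP: (tree_path_branch (model_path v) (cK vK) tiv tjv (top_neq_c i) (top_neq_c j) eq_step).
  exact/negP/(tops_incomparable ij ik jk).
exact/negP/(tops_incomparable ji jk ik).
Qed.

Lemma common_vertex_degree : n <= #|[set y | t c y]|.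
Proof.
rewrite -[n in n <= _]card_ord -(card_imset _ first_step_inj).
apply: subset_leq_card; apply/subsetP => y /imsetP[i _ ->].
by rewrite inE root_path_head // top_neq_c.
Qed.

End RootedAtCommonVertex.

Lemma model_degree : exists c, n <= #|[set y | t c y]|.
Proof.
have [c cK] := K_paths_common_vertex.
by exists c; apply: common_vertex_degree cK.
Qed.

End DegreeLowerBound.

Theorem mainTheorem11 (n : nat) (hn : 4 <= n) :
  [/\ SVS (@An_adj n) (An_S n) (An_K n),
      branch_vertices (@An_adj n) (An_K n) = An_S n,
      (forall v w, v \in An_S n -> w \in An_S n -> v != w ->
         branch_adj (@An_adj n) (An_K n) v w),
      h21 n (@An_adj n)
    & ~ h21 n.-1 (@An_adj n)].
Proof.
have n3 : 3 <= n := ltnW hn.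
split.
- split.
  + by split; [apply: An_sym | apply: An_irr].
  + exact: An_split.
  + by have [W [t [P [tree_t _ model]]]] := An_h21 n; exists W, t, P.
  + exact: An_K_degree.
  + move=> k hk f; apply: An_sun_condition.
    by case/orP: hk => [/eqP -> | /andP[_ /ltnW]].
- exact: An_branch_vertices.
- by move=> v w; apply: An_branch_complete.
- exact: An_h21.
- case=> W [t [P [tree_t deg model]]].
  have [c c_deg] := model_degree n3 tree_t model.
  by have := leq_trans c_deg (deg c); rewrite leqNgt ltn_predL (leq_trans _ hn).
Qed.
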